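(* In Algorithm SC (with $|b(v)|\le\deg(v)$ for all $v$ and $\alpha\in(0,1/4]$), for every round $i$ and every $v\in V$: if $\tilde\phi^i_v>0$ then $r^{\le i-1}_v\ge\frac{\ln n}{\alpha}$, and if $\tilde\phi^i_v<0$ then $r^{\le i-1}_v\le-\frac{\ln n}{\alpha}$.
   Context: Let $G=(V,E)$ be a unit-capacity undirected graph, $n=|V|\ge3$, every vertex of degree $\deg(v)\ge1$, each edge with a fixed arbitrary orientation; $B\in\mathbb R^{V\times E}$ is the incidence matrix (column $(u,v)$ has $+1$ in row $u$, $-1$ in row $v$, $0$ elsewhere). Algorithm SC takes $b\in\mathbb R^V$ with $|b(v)|\le\deg(v)$ for all $v$, $\alpha\in(0,1/4]$ and an integer $T\ge1$. Set $w^1_{v,+}=w^1_{v,-}=1$ for all $v$. For $i=1,\dots,T$: (1) for $\circ\in\{+,-\}$, $\tilde w^i_{v,\circ}=w^i_{v,\circ}$ if $w^i_{v,\circ}\ge n$ and $\tilde w^i_{v,\circ}=0$ otherwise; (2) $\tilde\phi^i_v=(\tilde w^i_{v,+}-\tilde w^i_{v,-})/\deg(v)$; (3) for each edge $(u,v)$, $f^i(u,v)=+1$ if $\tilde\phi^i_u>\tilde\phi^i_v$, $-1$ if $\tilde\phi^i_u<\tilde\phi^i_v$, $0$ otherwise; (4) if $\langle\tilde\phi^i,b\rangle>\langle\tilde\phi^i,Bf^i\rangle$, terminate; (5) $r^i_v=(b(v)-(Bf^i)_v)/\deg(v)$; (6) $w^{i+1}_{v,+}=w^i_{v,+}(1+\alpha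 r^i_v)$ and $w^{i+1}_{v,-}=w^i_{v,-}(1-\alpha r^i_v)$. Write $r^{\le i}_v=\sum_{i'=1}^{i}r^{i'}_v$, with $r^{\le 0}_v=0$. *)

From HB Require Import structures.
From mathcomp Require Import all_boot all_order all_algebra.
From mathcomp Require Import reals exp.
Set Implicit Arguments. Unset Strict Implicit. Unset Printing Implicit Defensive.
Import Order.TTheory GRing.Theory Num.Theory.
Local Open Scope ring_scope.

(* Graph G = (V,E): V, E finite types; each edge e has a fixed orientation
   (src e, dst e).  Algorithm SC with input b, alpha. *)
Section SC.
Context (R : realType) (V E : finType) (src dst : E -> V)
        (b : V -> R) (alpha : R).

Definition deg (v : V) : R := (#|[set e | (src e == v) || (dst e == v)]|)%:R.

Definition nV : R := (#|V|)%:R.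

(* (B f)_v for the incidence matrix B: column (u,v) has +1 at u, -1 at v *)
Definition Bmul (f : E -> R) (v : V) : R :=
  \sum_(e | src e == v) f e - \sum_(e | dst e == v) f e.

Definition trunc_w (w : R) : R := if nV <= w then w else 0.

Definition phi_of (wp wm : V -> R) (v : V) : R :=
  (trunc_w (wp v) - trunc_w (wm v)) / deg v.

Definition flow_of (phi : V -> R) (e : E) : R :=
  if phi (dst e) < phi (src e) then 1
  else if phi (src e) < phi (dst e) then -1 else 0.

Definition resid_of (phi : V -> R) (v : V) : R :=
  (b v - Bmul (flow_of phi) v) / deg v.

(* weights_at k = (w^{k+1}_{.,+}, w^{k+1}_{.,-}) ; step (6) *)
Fixpoint weights_at (k : nat) : (V -> R) * (V -> R) :=
  match k with
  | 0 => (fun _ => 1, fun _ => 1)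
  | k'.+1 =>
      let: (wp, wm) := weights_at k' in
      let r := resid_of (phi_of wp wm) in
      (fun v => wp v * (1 + alpha * r v), fun v => wm v * (1 - alpha * r v))
  end.

(* round-i quantities, i >= 1 *)
Definition w_plus (i : nat) : V -> R := (weights_at i.-1).1.
Definition w_minus (i : nat) : V -> R := (weights_at i.-1).2.
Definition phi_t (i : nat) : V -> R := phi_of (w_plus i) (w_minus i).
Definition f_round (i : nat) : E -> R := flow_of (phi_t i).
Definition r_round (i : nat) : V -> R := resid_of (phi_t i).

Definition r_le (i : nat) (v : V) : R := \sum_(1 <= k < i.+1) r_round k v.

Definition terminates_at (i : nat) : bool :=
  \sum_v phi_t i v * Bmul (f_round i) v < \sum_v phi_t i v * b v.

End SC.

(* Every residual satisfies |r| <= 2, since |b(v)| and |(Bf)_v| are both at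
   most deg(v); hence |alpha r| <= 1 and, by 1 + x <= exp x, the updates obey
   0 <= w (1 +- alpha r) <= w exp(+- alpha r).  Inductively
   w_{v,+} <= exp(alpha r^{<=i-1}_v) and w_{v,-} <= exp(-alpha r^{<=i-1}_v).
   A truncated potential of sign +- forces the corresponding weight to be at
   least n, and taking logarithms gives the claim. *)
From HB Require Import structures.
From mathcomp Require Import all_boot all_order all_algebra.
From mathcomp Require Import reals sequences exp.
From mathcomp Require Import lra.
Set Implicit Arguments. Unset Strict Implicit. Unset Printing Implicit Defensive.
Import Order.TTheory GRing.Theory Num.Theory.
Local Open Scope ring_scope.

Lemma mul1D_le_expRD (R : realType) (w s x : R) :
  -1 <= x -> 0 <= w <= expR s -> 0 <= w * (1 + x) <= expR (s + x).
Proof.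
move=> x_ge /andP[w_ge0 w_le]; apply/andP; split.
  by apply: mulr_ge0 => //; lra.
by rewrite expRD; apply: ler_pM => //; [lra | exact: expR_ge1Dx].
Qed.

Lemma ln_le_of_le_expR (R : realType) (y s : R) :
  0 < y -> y <= expR s -> ln y <= s.
Proof. by move=> y_gt0 y_le; rewrite -[s]expRK ler_ln ?posrE ?expR_gt0. Qed.

Section ResidualBounds.
Variables (R : realType) (V E : finType) (src dst : E -> V).
Hypothesis loopless : forall e, src e != dst e.

Lemma normr_flow_of_le1 (phi : V -> R) e : `|flow_of src dst phi e| <= 1.
Proof.
rewrite /flow_of; case: ifP => _; first by rewrite normr1.
by case: ifP => _; rewrite ?normrN ?normr1 ?normr0.
Qed.

Lemma normr_Bmul_le_deg (f : E -> R) v :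
  (forall e, `|f e| <= 1) -> `|Bmul src dst f v| <= deg R src dst v.
Proof.
move=> f_le1; rewrite /Bmul /deg -sum1_card natr_sum.
apply: (le_trans (ler_normB _ _)).
apply: (@le_trans _ _ (\sum_(e | src e == v) 1 + \sum_(e | dst e == v) (1 : R))).
  by apply: lerD; apply: (le_trans (ler_norm_sum _ _ _)); apply: ler_sum.
rewrite [X in _ <= X]big_mkcond (big_mkcond (fun e => src e == v)).
rewrite (big_mkcond (fun e => dst e == v)) -big_split /=.
apply: ler_sum => e _; rewrite inE.
case: (src e =P v) => [src_v|_]; case: (dst e =P v) => [dst_v|_] /=.
- by have := loopless e; rewrite src_v dst_v eqxx.
- by rewrite addr0.
- by rewrite add0r.
- by rewrite addr0.
Qed.

Variables (b : V -> R) (alpha : R).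
Hypothesis deg_ge1 : forall v, 1 <= deg R src dst v.
Hypothesis normr_b_le_deg : forall v, `|b v| <= deg R src dst v.

Lemma normr_resid_of_le2 (phi : V -> R) v : `|resid_of src dst b phi v| <= 2.
Proof.
have deg_gt0 : 0 < deg R src dst v by apply: lt_le_trans (deg_ge1 v).
rewrite /resid_of normrM normfV (gtr0_norm deg_gt0) ler_pdivrMr //.
apply: (le_trans (ler_normB _ _)).
have := normr_Bmul_le_deg v (normr_flow_of_le1 phi).
have := normr_b_le_deg v; lra.
Qed.

Hypotheses (alpha_ge0 : 0 <= alpha) (alpha_le_half : alpha <= 1 / 2).

Lemma normr_scaled_resid_le1 (phi : V -> R) v :
  `|alpha * resid_of src dst b phi v| <= 1.
Proof.
rewrite normrM (ger0_norm alpha_ge0).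
apply: le_trans (ler_wpM2l alpha_ge0 (normr_resid_of_le2 phi v)) _.
by rewrite -ler_pdivlMr // mul1r.
Qed.

Lemma weights_at_le_expR j v :
  let: (wp, wm) := weights_at src dst b alpha j in
  0 <= wp v <= expR (alpha * r_le src dst b alpha j v) /\
  0 <= wm v <= expR (- (alpha * r_le src dst b alpha j v)).
Proof.
elim: j => [|j IH].
  by rewrite /r_le big_geq //= mulr0 oppr0 expR0 ler01 lexx.
rewrite /r_le big_nat_recr //=; move: IH.
rewrite /r_le /r_round /phi_t /w_plus /w_minus /=.
case: (weights_at src dst b alpha j) => wp wm /= [wp_bd wm_bd].
have := normr_scaled_resid_le1 (phi_of src dst wp wm) v.
rewrite ler_norml => /andP[ar_ge ar_le].
rewrite [alpha * (_ + _)]mulrDr opprD; split; first exact: mul1D_le_expRD.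
by apply: (@mul1D_le_expRD _ _ _ (- (alpha * _))); first rewrite lerNr opprK.
Qed.

End ResidualBounds.

Lemma trunc_w_ge0 (R : realType) (V : finType) (w : R) : 0 <= trunc_w V w.
Proof. by rewrite /trunc_w; case: ifP => // /(le_trans (ler0n _ _)). Qed.

Lemma nV_le_of_trunc_w_gt0 (R : realType) (V : finType) (w : R) :
  0 < trunc_w V w -> nV R V <= w.
Proof. by rewrite /trunc_w; case: ifP => // _; rewrite ltxx. Qed.

Lemma ln_nV_le_of_trunc_w_subr_gt0 (R : realType) (V : finType) (w w' s : R) :
  (0 < #|V|)%N -> 0 < trunc_w V w - trunc_w V w' -> w <= expR s ->
  ln (nV R V) <= s.
Proof.
move=> V_gt0 trunc_gt w_le.
have /nV_le_of_trunc_w_gt0 nV_le : 0 < trunc_w V w.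
  by apply: lt_le_trans trunc_gt _; rewrite gerDl oppr_le0 trunc_w_ge0.
by apply: ln_le_of_le_expR (le_trans nV_le w_le); rewrite /nV ltr0n.
Qed.

Theorem lemma2p7 (R : realType) (V E : finType) (src dst : E -> V)
    (b : V -> R) (alpha : R) (T : nat) :
  (2 < #|V|)%N ->
  (forall e, src e != dst e) ->
  (forall v, 1 <= deg R src dst v) ->
  (forall v, `|b v| <= deg R src dst v) ->
  0 < alpha -> alpha <= 1 / 4 ->
  (1 <= T)%N ->
  forall i : nat, (1 <= i <= T)%N ->
  (* round i is actually executed: no termination in rounds 1, ..., i-1 *)
  (forall k : nat, (1 <= k < i)%N -> ~~ terminates_at src dst b alpha k) ->
  forall v : V,
    (0 < phi_t src dst b alpha i v ->
       ln (nV R V) / alpha <= r_le src dst b alpha i.-1 v) /\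
    (phi_t src dst b alpha i v < 0 ->
       r_le src dst b alpha i.-1 v <= - (ln (nV R V) / alpha)).
Proof.
move=> V_gt2 loopless deg_ge1 b_le alpha_gt0 alpha_le _ i _ _ v.
have V_gt0 : (0 < #|V|)%N by apply: leq_ltn_trans V_gt2.
have deg_gt0 : 0 < deg R src dst v by apply: lt_le_trans (deg_ge1 v).
have alpha_le_half : alpha <= 1 / 2 by lra.
have := weights_at_le_expR loopless deg_ge1 b_le (ltW alpha_gt0) alpha_le_half i.-1 v.
rewrite /phi_t /phi_of /w_plus /w_minus.
case: (weights_at _ _ _ _ _) => wp wm /= [/andP[_ wp_le] /andP[_ wm_le]].
split.
- rewrite pmulr_lgt0 ?invr_gt0 // => phi_gt0.
  rewrite ler_pdivrMr // mulrC.
  exact: ln_nV_le_of_trunc_w_subr_gt0 V_gt0 phi_gt0 wp_le.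
- rewrite pmulr_llt0 ?invr_gt0 // -oppr_gt0 opprB => phi_lt0.
  rewrite lerNr ler_pdivrMr // mulrC mulrN.
  exact: ln_nV_le_of_trunc_w_subr_gt0 V_gt0 phi_lt0 wm_le.
Qed.
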